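(* Let $g_n(y)=\sum_{[\pi]\in\mathfrak{C}_{n}^o}y^{\operatorname{drop}_{eo}([\pi])}$. Then $g_1=1$ and for every $n\ge1$: (i) $g_{2n}=nyg_{2n-1}-y^2\frac{d}{dy}g_{2n-1}+y\frac{d}{dy}g_{2n-1}$; (ii) $g_{2n+1}=ng_{2n}-y\frac{d}{dy}g_{2n}+\frac{d}{dy}g_{2n}$.
   Context: For $n\ge1$, a cycle on $[n]=\{1,\dots,n\}$ is an equivalence class $[\pi]$ of permutations $\pi=\pi_1\cdots\pi_n$ of $[n]$ (in one-line notation) under cyclic rotation of the entries; the set of cycles on $[n]$ is $\mathfrak{C}_n$. Each cycle is represented by the permutation $\pi$ with $\pi_1=1$, and indices are read modulo $n$. A drop of $[\pi]$ is a consecutive pair $(\pi_i,\pi_{i+1})$, $1\le i\le n$, with $\pi_i>\pi_{i+1}$. By convention, the unique cycle $[(1)]\in\mathfrak{C}_1$ has exactly one drop $(\star,1)$, where $\star$ is considered neither even nor odd. A drop $(a,b)$ is even-odd if $a$ is even and $b$ is odd; $\operatorname{drop}_{eo}([\pi])$ is the number of even-odd drops of $[\pi]$. $\mathfrak{C}_n^o$ is the set of cycles $[\pi]\in\mathfrak{C}_n$ such that for every drop $(\pi_i,\pi_{i+1})$, the entry $\pi_{i+1}$ is odd. *)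

From HB Require Import structures.
From mathcomp Require Import all_boot all_order all_algebra all_fingroup.
Set Implicit Arguments. Unset Strict Implicit. Unset Printing Implicit Defensive.
Import GRing.Theory.
Local Open Scope ring_scope.

(* A cycle [pi] on [n] is represented by its unique representative with
   pi_1 = 1.  We encode the one-line word pi_1 ... pi_n by s : 'S_n via
   pi_{i+1} = val (s i) + 1 (positions and values shifted to 0-based). *)

Definition pv n (s : 'S_n) (i : 'I_n) : nat := (val (s i)).+1.

Definition rooted n (s : 'S_n) : bool :=
  [forall i : 'I_n, (val i == 0%N) ==> (val (s i) == 0%N)].

Definition is_drop n (s : 'S_n) (i : 'I_n) : bool :=
  (pv s (ordS i) < pv s i)%N.

Definition is_eo_drop n (s : 'S_n) (i : 'I_n) : bool :=
  [&& is_drop s i, ~~ odd (pv s i) & odd (pv s (ordS i))].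

Definition drop_eo n (s : 'S_n) : nat := #|[set i | is_eo_drop s i]|.

Definition in_Co n (s : 'S_n) : bool :=
  [forall i : 'I_n, is_drop s i ==> odd (pv s (ordS i))].

Definition g (n : nat) : {poly int} :=
  \sum_(s : 'S_n | rooted s && in_Co s) 'X^(drop_eo s).

(* A cycle of C_(m+1) is read as its word starting at 1.  Deleting the maximal
   entry m+1 is a bijection onto the pairs (w, gap) of a cycle word w on [m] and
   one of its m cyclic gaps (a, b), the inverse reinserting m+1 into that gap.
   The reinsertion replaces the pair (a, b) by the ascent (a, m+1) and the drop
   (m+1, b): the new cycle lies in C^o iff w does and b is odd, and it gains an
   even-odd drop iff m+1 is even and b is odd, while losing (a, b) if that was
   one.  Each entry of w is the b of exactly one gap, and w has uphalf m odd
   entries, e of which end its e even-odd drops.  So, with k = [m odd], a word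
   of C^o_m with e even-odd drops contributes
     e X^(e+k-1) + (uphalf m - e) X^(e+k)
       = uphalf m X^k X^e + (X^k - X^(k+1)) (X^e)',
   whence g_(m+1) = uphalf m X^k g_m + (X^k - X^(k+1)) g_m', which is (i) for
   m = 2n-1 and (ii) for m = 2n. *)

From HB Require Import structures.
From mathcomp Require Import all_boot all_order all_algebra all_fingroup.
From mathcomp Require Import zify ring.
Import GRing.Theory.
Set Implicit Arguments. Unset Strict Implicit. Unset Printing Implicit Defensive.

Section CyclicPairs.

Variable T : Type.
Implicit Types (x y : T) (w : seq T).

Definition cpairs w : seq (T * T) :=
  if w is x :: t then pairmap pair x (rcons t x) else [::].

Definition insert_after i y w := take i.+1 w ++ y :: drop i.+1 w.

Lemma size_cpairs w : size (cpairs w) = size w.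
Proof. by case: w => //= x t; rewrite size_pairmap size_rcons. Qed.

Lemma unzip2_cpairs w : unzip2 (cpairs w) = rot 1 w.
Proof.
case: w => // x t; rewrite rot1_cons /=.
by elim: (rcons t x) {1}x => //= z u IHu x0; rewrite IHu.
Qed.

Lemma nth_cpairs x0 w i : i < size w ->
  nth (x0, x0) (cpairs w) i = (nth x0 w i, nth x0 w (i.+1 %% size w)).
Proof.
case: w => // x t lt_i_w; rewrite /= (nth_pairmap x0) ?size_rcons // -rcons_cons.
rewrite !nth_rcons lt_i_w /=; congr (_, _).
move: lt_i_w; rewrite ltnS leq_eqVlt => /orP[/eqP->|lt_it].
  by rewrite ltnn eqxx modnn.
by rewrite lt_it modn_small.
Qed.

Lemma cpairs_insert_after x0 i y w a b : i < size w ->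
  nth (x0, x0) (cpairs w) i = (a, b) ->
  cpairs (insert_after i y w) =
    take i (cpairs w) ++ (a, y) :: (y, b) :: drop i.+1 (cpairs w).
Proof.
case: w => // x t; rewrite ltnS /insert_after /= => le_it.
have ->: rcons (take i t ++ y :: drop i t) x = take i (rcons t x) ++ y :: drop i (rcons t x).
  by rewrite rcons_cat /= -drop_rcons // -cats1 takel_cat.
set u := rcons t x; have lt_iu : i < size u by rewrite size_rcons ltnS.
rewrite -[in pairmap _ _ u](cat_take_drop i u) (drop_nth x lt_iu) !pairmap_cat /=.
set P := pairmap pair x (take i u).
have size_P : size P = i by rewrite size_pairmap size_takel // ltnW.
rewrite nth_cat size_P ltnn subnn => -[<- <-].
by rewrite take_size_cat // drop_cat size_P ltnNge leqnSn subSnn /= drop0.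
Qed.

End CyclicPairs.

Section Insertion.

Variable T : eqType.
Implicit Types (y : T) (v w : seq T).

Lemma perm_insert_after i y w : perm_eq (insert_after i y w) (y :: w).
Proof. by rewrite /insert_after -cat1s perm_catCA cat1s cat_take_drop. Qed.

Lemma head_insert_after x0 i y w : 0 < size w ->
  head x0 (insert_after i y w) = head x0 w.
Proof. by case: w. Qed.

Lemma index_insert_after i y w : i < size w -> y \notin w ->
  index y (insert_after i y w) = i.+1.
Proof.
move=> lt_iw w'y; have take'y : y \notin take i.+1 w by apply: contra w'y; apply: mem_take.
by rewrite index_cat (negbTE take'y) size_takel //= eqxx addn0.
Qed.

Lemma rem_insert_after i y w : y \notin w -> rem y (insert_after i y w) = w.
Proof.
move=> w'y; rewrite /insert_after -[RHS](cat_take_drop i.+1).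
have: y \notin take i.+1 w by apply: contra w'y; apply: mem_take.
elim: (take i.+1 w) => [|z t IHt] /=; rewrite ?eqxx // inE negb_or eq_sym.
by case/andP=> /negbTE-> /IHt->.
Qed.

Lemma insert_after_rem y v : 0 < index y v < size v ->
  insert_after (index y v).-1 y (rem y v) = v.
Proof.
case/andP=> idx_gt0 lt_yv; have v_y : y \in v by rewrite -index_mem.
have size_take : size (take (index y v) v) = index y v by rewrite size_takel // ltnW.
rewrite /insert_after prednK // remE take_size_cat // drop_size_cat //.
by rewrite -drop_index // cat_take_drop.
Qed.

Lemma insert_after_inj y i1 i2 w1 w2 :
  i1 < size w1 -> i2 < size w2 -> y \notin w1 -> y \notin w2 ->
  insert_after i1 y w1 = insert_after i2 y w2 -> (w1, i1) = (w2, i2).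
Proof.
move=> lt_i1 lt_i2 w1'y w2'y E.
have [<-] : i1.+1 = i2.+1 by rewrite -(index_insert_after lt_i1 w1'y) E index_insert_after.
by rewrite -(rem_insert_after i1 w1'y) E rem_insert_after.
Qed.

End Insertion.

Definition eo_drop (p : nat * nat) := [&& p.2 < p.1, ~~ odd p.1 & odd p.2].

Definition odd_bottom (p : nat * nat) := (p.2 < p.1) ==> odd p.2.

Definition drop_eo_seq (w : seq nat) := count eo_drop (cpairs w).

Definition in_Co_seq (w : seq nat) := all odd_bottom (cpairs w).

Section InsertMax.

Variables (y : nat) (w : seq nat) (i a b : nat).
Hypotheses (lt_iw : i < size w) (w_i : nth (0, 0) (cpairs w) i = (a, b)).
Hypotheses (lt_ay : a < y) (lt_by : b < y).

Let cpairs_w : cpairs w = take i (cpairs w) ++ (a, b) :: drop i.+1 (cpairs w).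
Proof. by rewrite -w_i -drop_nth ?size_cpairs // cat_take_drop. Qed.

Lemma in_Co_insert_after : in_Co_seq (insert_after i y w) = in_Co_seq w && odd b.
Proof.
rewrite /in_Co_seq (cpairs_insert_after _ lt_iw w_i) [in RHS]cpairs_w !all_cat /=.
rewrite /odd_bottom /= lt_by ltnNge (ltnW lt_ay) /=.
by case: (odd b); rewrite ?implybT ?andbT ?andbF.
Qed.

Lemma drop_eo_insert_after :
  drop_eo_seq (insert_after i y w) + eo_drop (a, b) = drop_eo_seq w + (~~ odd y && odd b).
Proof.
rewrite /drop_eo_seq (cpairs_insert_after _ lt_iw w_i) [in RHS]cpairs_w !count_cat /=.
have eo_ay : eo_drop (a, y) = false by rewrite /eo_drop /= ltnNge (ltnW lt_ay).
have eo_yb : eo_drop (y, b) = ~~ odd y && odd b by rewrite /eo_drop /= lt_by.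
rewrite eo_ay eo_yb; lia.
Qed.

End InsertMax.

Lemma count_odd_cpairs w : count (fun p : nat * nat => odd p.2) (cpairs w) = count odd w.
Proof.
transitivity (count odd (unzip2 (cpairs w))); first by rewrite count_map.
by rewrite unzip2_cpairs; have /seq.permP-> : perm_eq (rot 1 w) w by rewrite perm_rot.
Qed.

Lemma count_odd_non_eo_drop w :
  drop_eo_seq w + count (fun p => odd p.2 && ~~ eo_drop p) (cpairs w) = count odd w.
Proof.
rewrite -count_odd_cpairs /drop_eo_seq; elim: (cpairs w) => //= -[a b] c IHc.
by rewrite -IHc /eo_drop /=; case: (odd b) (_ < _) (odd a) => -[] [] /=; lia.
Qed.

Section Words.

Variable n : nat.
Implicit Type s : 'S_n.

Definition word s : seq nat := [seq pv s i | i <- enum 'I_n].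

Lemma size_word s : size (word s) = n.
Proof. by rewrite size_map size_enum_ord. Qed.

Lemma nth_word s (i : 'I_n) : nth 0 (word s) i = pv s i.
Proof. by rewrite (nth_map i) ?size_enum_ord ?nth_ord_enum. Qed.

Lemma word_inj : injective word.
Proof.
move=> s1 s2 Es; apply/permP => i; apply: val_inj.
by have := congr1 (nth 0 ^~ i) Es; rewrite /= !nth_word => -[].
Qed.

Lemma cpairs_word s : cpairs (word s) = [seq (pv s i, pv s (ordS i)) | i <- enum 'I_n].
Proof.
apply: (@eq_from_nth _ (0, 0)) => [|i].
  by rewrite size_cpairs size_word size_map size_enum_ord.
rewrite size_cpairs size_word => lt_in; have -> : i = Ordinal lt_in by [].
rewrite nth_cpairs size_word // [RHS](nth_map (Ordinal lt_in)) ?size_enum_ord //.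
by rewrite nth_ord_enum -!nth_word.
Qed.

Lemma drop_eo_word s : drop_eo s = drop_eo_seq (word s).
Proof.
rewrite /drop_eo_seq cpairs_word count_map enumT /drop_eo cardsE cardE /enum_mem size_filter.
by apply: eq_count.
Qed.

Lemma in_Co_word s : in_Co s = in_Co_seq (word s).
Proof.
rewrite /in_Co_seq cpairs_word all_map.
by apply/forallP/allP => [Hs i _ | Hs i]; [exact: Hs | exact: Hs (mem_enum _ i)].
Qed.

Lemma perm_word s : perm_eq (word s) (iota 1 n).
Proof.
have pv_inj : injective (pv s) by move=> i j /succn_inj/val_inj/perm_inj.
have uniq_word : uniq (word s) by rewrite (map_inj_uniq pv_inj) enum_uniq.
apply: uniq_perm => //; first exact: iota_uniq.
apply: (uniq_min_size uniq_word _ _).2; last by rewrite size_word size_iota.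
by move=> _ /mapP[i _ ->]; rewrite mem_iota add1n ltnS ltn_ord.
Qed.

Lemma perm_words : perm_eq (map word (enum 'S_n)) (permutations (iota 1 n)).
Proof.
have uniq_words : uniq (map word (enum 'S_n)) by rewrite (map_inj_uniq word_inj) enum_uniq.
apply: uniq_perm => //; first exact: permutations_uniq.
apply: (uniq_min_size uniq_words _ _).2.
  by move=> _ /mapP[s _ ->]; rewrite mem_permutations perm_word.
by rewrite size_map -cardT card_Sn size_permutations ?iota_uniq // size_iota.
Qed.

Lemma rooted_word s : 0 < n -> rooted s = (head 0 (word s) == 1).
Proof.
move=> n_gt0; pose i0 := Ordinal n_gt0.
rewrite -nth0 (nth_word s i0) /pv eqSS.
apply/forallP/idP => [/(_ i0) // | s_i0 i]; apply/implyP => /eqP i_0.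
by have -> : i = i0 by apply: val_inj.
Qed.

End Words.

Definition cycle_words n := [seq w <- permutations (iota 1 n) | head 0 w == 1].

Lemma mem_cycle_words n w : (w \in cycle_words n) = perm_eq w (iota 1 n) && (head 0 w == 1).
Proof. by rewrite mem_filter mem_permutations andbC. Qed.

Lemma size_cycle_word m w : w \in cycle_words m -> size w = m.
Proof. by rewrite mem_cycle_words => /andP[/perm_size-> _]; rewrite size_iota. Qed.

Lemma cycle_word_ltn m w : w \in cycle_words m -> {in w, forall x, x < m.+1}.
Proof.
rewrite mem_cycle_words => /andP[w_iota _] x.
by rewrite (perm_mem w_iota) mem_iota add1n => /andP[].
Qed.

Lemma cycle_word_notin m w : w \in cycle_words m -> m.+1 \notin w.
Proof. by move=> /cycle_word_ltn lt_w; apply/negP => /lt_w; rewrite ltnn. Qed.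

Lemma count_odd_cycle_word m w : w \in cycle_words m -> count odd w = uphalf m.
Proof.
rewrite mem_cycle_words => /andP[/seq.permP-> _].
elim: m => // m IHm; rewrite -[in iota 1 m.+1](addn1 m) iotaD count_cat IHm /=.
rewrite addn0 add0n uphalf_half.
by case: (odd m); rewrite ?addn0 ?add1n ?addn1.
Qed.

Section CycleWordsSucc.

Variable m : nat.
Hypothesis m_gt0 : 0 < m.

Let perm_iota_succ : perm_eq (iota 1 m.+1) (m.+1 :: iota 1 m).
Proof. by rewrite -[in iota 1 m.+1](addn1 m) iotaD add1n perm_catC. Qed.

Lemma insert_after_cycle_word i w :
  w \in cycle_words m -> insert_after i m.+1 w \in cycle_words m.+1.
Proof.
move=> w_m; have size_w := size_cycle_word w_m.
move: w_m; rewrite !mem_cycle_words head_insert_after ?size_w // => /andP[w_iota ->].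
by rewrite (permPl (perm_insert_after i _ w)) (permPr perm_iota_succ) perm_cons w_iota.
Qed.

Lemma cycle_word_rem v : v \in cycle_words m.+1 ->
  [/\ rem m.+1 v \in cycle_words m, (index m.+1 v).-1 < m
    & insert_after (index m.+1 v).-1 m.+1 (rem m.+1 v) = v].
Proof.
rewrite mem_cycle_words => /andP[v_iota v_head].
have v_y : m.+1 \in v by rewrite (perm_mem v_iota) mem_iota add1n ltnSn.
have rem_iota : perm_eq (rem m.+1 v) (iota 1 m).
  by rewrite -(perm_cons m.+1) -(permPl (perm_to_rem v_y)) -(permPr perm_iota_succ).
have idx_gt0 : 0 < index m.+1 v.
  by case: v v_head {v_iota v_y rem_iota} => //= x t /eqP ->; rewrite eqSS eq_sym eqn0Ngt m_gt0.
have idx_lt : index m.+1 v < size v by rewrite index_mem.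
have v_ins : insert_after (index m.+1 v).-1 m.+1 (rem m.+1 v) = v.
  by apply: insert_after_rem; rewrite idx_gt0.
split=> //; last by move: idx_lt; rewrite -ltnS prednK // (perm_size v_iota) size_iota.
rewrite mem_cycle_words rem_iota -(head_insert_after 0 (index m.+1 v).-1 m.+1) ?v_ins //.
by rewrite (perm_size rem_iota) size_iota.
Qed.

Lemma perm_cycle_words_succ :
  perm_eq (cycle_words m.+1) [seq insert_after i m.+1 w | w <- cycle_words m, i <- iota 0 m].
Proof.
have cycle_words_uniq k : uniq (cycle_words k) by rewrite filter_uniq ?permutations_uniq.
apply: uniq_perm => //.
  apply: allpairs_uniq => //; first exact: iota_uniq.
  move=> [? ?] [? ?] /allpairsP[[w1 i1] [/= w1_m i1_m [-> ->]]].
  move=> /allpairsP[[w2 i2] [/= w2_m i2_m [-> ->]]]; move: i1_m i2_m; rewrite !mem_iota /=.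
  move=> lt_i1 lt_i2; apply: insert_after_inj;
    by rewrite ?(size_cycle_word w1_m, size_cycle_word w2_m)
               ?(cycle_word_notin w1_m, cycle_word_notin w2_m).
move=> v; apply/idP/allpairsP => [/cycle_word_rem[v_m idx_lt v_ins] | [[w i] [/= w_m _ ->]]].
  by exists (rem m.+1 v, (index m.+1 v).-1); rewrite /= mem_iota.
exact: insert_after_cycle_word.
Qed.

End CycleWordsSucc.

Local Open Scope ring_scope.

Definition insert_op (c k : nat) (f : {poly int}) :=
  c%:R * 'X^k * f + ('X^k - 'X^(k.+1)) * f^`().

Lemma insert_op_sum (I : Type) (r : seq I) (P : pred I) (F : I -> {poly int}) c k :
  insert_op c k (\sum_(i <- r | P i) F i) = \sum_(i <- r | P i) insert_op c k (F i).
Proof. by rewrite /insert_op raddf_sum !mulr_sumr -big_split. Qed.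

Lemma insert_op_Xn c k e :
  insert_op c k 'X^e = 'X^((e + k).-1) *+ e + 'X^(e + k) *+ c - 'X^(e + k) *+ e.
Proof.
rewrite /insert_op derivXn; case: e => [|e];
  by rewrite ?add0n ?addSn /= ?exprS ?exprD ?expr0 ?mulr0n; ring.
Qed.

Lemma sum_insert_after y w : {in w, forall x, x < y}%N ->
  \sum_(i <- iota 0 (size w) | in_Co_seq (insert_after i y w))
     'X^(drop_eo_seq (insert_after i y w)) =
  if in_Co_seq w then insert_op (count odd w) (~~ odd y) 'X^(drop_eo_seq w) else 0.
Proof.
move=> lt_wy; set e := drop_eo_seq w; set K := (e + ~~ odd y)%N; set c := cpairs w.
have insert_i i : i \in iota 0 (size w) ->
    (if in_Co_seq (insert_after i y w) then 'X^(drop_eo_seq (insert_after i y w)) else 0)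
    = if in_Co_seq w && odd (nth (0, 0) c i).2
      then 'X^(K - eo_drop (nth (0, 0) c i)) else 0 :> {poly int}.
  rewrite mem_iota => /= lt_iw; case w_i: (nth (0, 0) c i) => [a b].
  have [lt_ay lt_by] : (a < y /\ b < y)%N.
    move: w_i; rewrite /c nth_cpairs // => -[<- <-].
    by split; apply/lt_wy/mem_nth; rewrite // ltn_pmod // (leq_ltn_trans _ lt_iw).
  rewrite (in_Co_insert_after lt_iw w_i) //; case: ifP => //= /andP[_ odd_b].
  have := drop_eo_insert_after lt_iw w_i lt_ay lt_by; rewrite odd_b andbT -/e -/K.
  by move=> <-; rewrite addnK.
rewrite big_mkcond (eq_big_seq _ insert_i) -big_mkcond /=.
case: (in_Co_seq w) => /=; last by rewrite big_pred0.
transitivity (\sum_(p <- c | odd p.2) 'X^(K - eo_drop p) : {poly int}).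
  by rewrite (big_nth (0, 0)) size_cpairs /index_iota subn0.
rewrite (bigID eo_drop) /=.
rewrite (eq_big eo_drop (fun=> 'X^(K.-1))); first last.
- by move=> p /andP[_ ->]; rewrite subn1.
- by case=> a b; rewrite /eo_drop /=; case: (odd b); rewrite ?andbF ?andbT.
rewrite [X in _ + X](eq_bigr (fun=> 'X^K)); last by move=> p /andP[_ /negbTE->]; rewrite subn0.
rewrite !big_const_seq !iter_addr_0 insert_op_Xn -(count_odd_non_eo_drop w) mulrnDr.
rewrite /e /drop_eo_seq -/c; ring.
Qed.

Lemma g_cycle_words n : (0 < n)%N ->
  g n = \sum_(w <- cycle_words n | in_Co_seq w) 'X^(drop_eo_seq w).
Proof.
move=> n_gt0; rewrite big_filter_cond -(perm_big _ (perm_words n)) big_map big_enum_cond /=.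
by apply: eq_big => [s | s _]; rewrite ?rooted_word ?in_Co_word ?drop_eo_word.
Qed.

Lemma g_succ m : (0 < m)%N -> g m.+1 = insert_op (uphalf m) (odd m) (g m).
Proof.
move=> m_gt0; rewrite (g_cycle_words (ltn0Sn m)) (perm_big _ (perm_cycle_words_succ m_gt0)) /=.
rewrite big_mkcond big_allpairs_dep (g_cycle_words m_gt0) insert_op_sum [RHS]big_mkcond /=.
apply: eq_big_seq => w w_m; rewrite -big_mkcond -{1}(size_cycle_word w_m).
by rewrite (sum_insert_after (cycle_word_ltn w_m)) (count_odd_cycle_word w_m) /= negbK.
Qed.

Theorem lemma4p1 :
  g 1 = 1 /\
  (forall n : nat, (0 < n)%N ->
     g (2 * n) = n%:R * 'X * g (2 * n - 1) - 'X ^+ 2 * (g (2 * n - 1))^`()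
                 + 'X * (g (2 * n - 1))^`()) /\
  (forall n : nat, (0 < n)%N ->
     g (2 * n + 1) = n%:R * g (2 * n) - 'X * (g (2 * n))^`() + (g (2 * n))^`()).
Proof.
split; last split => n n_gt0.
- have cycle_words1 : cycle_words 1 = [:: [:: 1%N]] by [].
  by rewrite g_cycle_words // cycle_words1 big_cons big_nil /= expr0 addr0.
- have -> : (2 * n = (2 * n - 1).+1)%N by lia.
  have -> : (2 * n - 1 = (n.-1).*2.+1)%N by rewrite -mul2n; lia.
  rewrite g_succ //= odd_double doubleK prednK // /insert_op expr1; ring.
- rewrite addn1 g_succ ?muln_gt0 // mul2n odd_double uphalf_double /insert_op expr0 expr1; ring.
Qed.
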